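(* Every rotation $R$ of $\mathbb{R}^4$ can be written as $R=R_0\circ R^{xw}_\psi\circ R^{zw}_\phi\circ R^{xy}_\theta$ for some angles $\theta,\phi,\psi$ and some rotation $R_0$ of $\mathbb{R}^4$ that is the trivial extension of a rotation of $\mathbb{R}^3=\{(x,y,z,0)\}$ (i.e. $R_0$ fixes $(0,0,0,1)$ and maps $\{(x,y,z,0)\}$ to itself).
   Context: A rotation of $\mathbb{R}^n$ is a linear map whose matrix is orthogonal with determinant $1$. Denote coordinates of $\mathbb{R}^4$ by $(x,y,z,w)$ (indices $1,2,3,4$). For coordinate indices $k<j$, the elementary rotation $R^{kj}_\alpha$ is the linear map of $\mathbb{R}^4$ that fixes the other two standard basis vectors and acts on the $k,j$ coordinate plane by $\mathbf{e}_k\mapsto\cos\alpha\,\mathbf{e}_k+\sin\alpha\,\mathbf{e}_j$, $\mathbf{e}_j\mapsto-\sin\alpha\,\mathbf{e}_k+\cos\alpha\,\mathbf{e}_j$. Thus $R^{xy}_\theta$, $R^{zw}_\phi$, $R^{xw}_\psi$ are the elementary rotations of the $x,y$-, $z,w$- and $x,w$-planes respectively. *)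

From mathcomp Require Import all_boot all_order all_algebra.
From mathcomp Require Import reals trigo.
Set Implicit Arguments. Unset Strict Implicit. Unset Printing Implicit Defensive.
Import Order.TTheory GRing.Theory Num.Theory.
Local Open Scope ring_scope.

(* Linear maps of R^n are represented by matrices acting on COLUMN vectors:
   v |-> M *m v.  Composition f \o g corresponds to the product M_f *m M_g. *)

Definition is_rotation {R : realType} {n : nat} (M : 'M[R]_n) : Prop :=
  M^T *m M = 1%:M /\ \det M = 1.

Definition basis_vec {R : realType} {n : nat} (i : 'I_n) : 'cV[R]_n :=
  \col_(r < n) (r == i)%:R.

Definition elem_rot {R : realType} (k j : 'I_4) (a : R) : 'M[R]_4 :=
  \matrix_(r < 4, c < 4)
    if (r == k) && (c == k) then cos a
    else if (r == j) && (c == j) then cos a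
    else if (r == j) && (c == k) then sin a
    else if (r == k) && (c == j) then - sin a
    else (r == c)%:R.

Definition ix : 'I_4 := @Ordinal 4 0 isT.
Definition iy : 'I_4 := @Ordinal 4 1 isT.
Definition iz : 'I_4 := @Ordinal 4 2 isT.
Definition iw : 'I_4 := @Ordinal 4 3 isT.

Definition Rxy {R : realType} (a : R) : 'M[R]_4 := elem_rot ix iy a.
Definition Rzw {R : realType} (a : R) : 'M[R]_4 := elem_rot iz iw a.
Definition Rxw {R : realType} (a : R) : 'M[R]_4 := elem_rot ix iw a.

Definition trivial_ext_rotation {R : realType} (M : 'M[R]_4) : Prop :=
  is_rotation M /\ M *m basis_vec (R:=R) iw = basis_vec iw /\
  (forall v : 'cV[R]_4, v iw 0 = 0 -> (M *m v) iw 0 = 0).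

From mathcomp Require Import all_boot all_order all_algebra.
From mathcomp Require Import reals trigo.
From mathcomp Require Import ring lra.
Import Order.TTheory GRing.Theory Num.Theory.
Local Open Scope ring_scope.

(* The last row of a rotation M is a unit vector of R^4.  Every unit vector is
   the last row (sin ψ cos θ, - sin ψ sin θ, cos ψ sin φ, cos ψ cos φ) of
   N = Rxw ψ Rzw φ Rxy θ for suitable angles.  Then R0 = M N^T is a rotation
   whose last row is e_w; being orthogonal, it therefore fixes e_w and keeps
   the hyperplane w = 0 invariant, and M = R0 N. *)

Section Rotations.
Context {R : realType} {n : nat}.
Implicit Types A B : 'M[R]_n.

Lemma is_rotation_mul A B :
  is_rotation A -> is_rotation B -> is_rotation (A *m B).
Proof.
move=> [oA dA] [oB dB]; split; last by rewrite det_mulmx dA dB mulr1.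
by rewrite trmx_mul mulmxA -(mulmxA B^T) oA mulmx1.
Qed.

Lemma is_rotation_tr A : is_rotation A -> is_rotation A^T.
Proof. by move=> [oA dA]; rewrite /is_rotation trmxK det_tr (mulmx1C oA). Qed.

Lemma orthogonal_det_sqr A : A^T *m A = 1%:M -> \det A ^+ 2 = 1.
Proof. by move=> oA; rewrite expr2 -{1}det_tr -det_mulmx oA det1. Qed.

Lemma rotation_row_unit A i : is_rotation A -> row i A *m (row i A)^T = 1%:M.
Proof.
move=> [oA _]; rewrite rowE trmx_mul mulmxA -(mulmxA _ A) (mulmx1C oA) mulmx1.
by rewrite trmx_delta mul_delta_mx; apply/matrixP => p q; rewrite !ord1 !mxE.
Qed.

Lemma rotation_fixes_of_row A i :
  is_rotation A -> row i A = delta_mx 0 i :> 'rV_n ->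
  A *m delta_mx i 0 = delta_mx i 0 :> 'cV_n.
Proof.
move=> [oA _] rowA.
have fixT : A^T *m delta_mx i 0 = delta_mx i 0 :> 'cV_n.
  by rewrite -[X in A^T *m X]trmx_delta -trmx_mul -rowE rowA trmx_delta.
by rewrite -{1}fixT mulmxA (mulmx1C oA) mul1mx.
Qed.

End Rotations.

Lemma basis_vecE {R : realType} {n} (i : 'I_n) :
  basis_vec i = delta_mx i 0 :> 'cV[R]_n.
Proof. by apply/matrixP => r c; rewrite !mxE ord1 eqxx andbT. Qed.

Lemma trivial_ext_rotation_of_row {R : realType} (A : 'M[R]_4) :
  is_rotation A -> row iw A = delta_mx 0 iw :> 'rV_4 -> trivial_ext_rotation A.
Proof.
move=> rotA rowA; split=> //.
split; first by rewrite basis_vecE rotation_fixes_of_row.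
move=> v vw0; have := congr1 (fun B : 'rV_1 => B 0 0) (row_mul iw A v).
by rewrite rowA -rowE !mxE vw0.
Qed.

Ltac elem_rot_by_entries k j :=
  case: k j => [[|[|[|[|?]]]] ?] [[|[|[|[|?]]]] ?] //= _;
  apply/matrixP => -[[|[|[|[|?]]]] ?] -[[|[|[|[|?]]]] ?] //;
  rewrite !mxE ?big_ord_recr ?big_ord0 /= ?mxE /=;
  rewrite ?cosD ?sinD ?cosN ?sinN ?cos0 ?sin0;
  ring.

Section ElementaryRotations.
Context {R : realType}.
Implicit Types (a b : R) (k j : 'I_4).

Lemma elem_rot0 k j : (k < j)%N -> elem_rot k j 0 = 1%:M :> 'M[R]_4.
Proof. by elem_rot_by_entries k j. Qed.

Lemma elem_rotD k j a b : (k < j)%N ->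
  elem_rot k j a *m elem_rot k j b = elem_rot k j (a + b).
Proof. by elem_rot_by_entries k j. Qed.

Lemma trmx_elem_rot k j a : (k < j)%N -> (elem_rot k j a)^T = elem_rot k j (- a).
Proof. by elem_rot_by_entries k j. Qed.

Lemma elem_rot_rotation k j a : (k < j)%N -> is_rotation (elem_rot k j a).
Proof.
move=> lt_kj.
have orth b : (elem_rot k j b)^T *m elem_rot k j b = 1%:M.
  by rewrite trmx_elem_rot // elem_rotD // addNr elem_rot0.
split=> //.
(* det (elem_rot a) = det (elem_rot (a / 2)) ^+ 2, and the latter matrix is
   orthogonal. *)
by rewrite (splitr a) -elem_rotD // det_mulmx -expr2 orthogonal_det_sqr.
Qed.

End ElementaryRotations.

Section Angles.
Context {R : realType}.

Lemma cos_sin_of_unit (p q : R) : p ^+ 2 + q ^+ 2 = 1 ->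
  exists t : R, cos t = p /\ sin t = q.
Proof.
move=> pq1; have p_itv : -1 <= p <= 1 by apply/andP; split; nra.
have sqrt_q : Num.sqrt (1 - p ^+ 2) = `|q| by rewrite -pq1 addrC addKr sqrtr_sqr.
have [q_ge0|q_lt0] := leP 0 q.
  by exists (acos p); rewrite acosK ?in_itv // sin_acos // sqrt_q ger0_norm.
exists (- acos p); rewrite cosN sinN acosK ?in_itv // sin_acos // sqrt_q.
by rewrite ltr0_norm // opprK.
Qed.

Lemma polar_coordinates (a b : R) : exists t : R,
  Num.sqrt (a ^+ 2 + b ^+ 2) * cos t = a /\
  Num.sqrt (a ^+ 2 + b ^+ 2) * sin t = b.
Proof.
set r := Num.sqrt _.
have r2 : r ^+ 2 = a ^+ 2 + b ^+ 2 by rewrite sqr_sqrtr // addr_ge0 // sqr_ge0.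
have [r0|r_neq0] := eqVneq r 0.
  have [-> ->] : a = 0 /\ b = 0 by move: r2; rewrite r0; split; nra.
  by exists 0; rewrite r0 !mul0r.
have [t [c_t s_t]] : exists t : R, cos t = a / r /\ sin t = b / r.
  by apply: cos_sin_of_unit; rewrite !expr_div_n -mulrDl -r2 divff // expf_neq0.
by exists t; rewrite c_t s_t ![r * (_ / r)]mulrC !divfK.
Qed.

End Angles.

Lemma sum_ord4 {V : nmodType} (F : 'I_4 -> V) :
  \sum_(i < 4) F i = F ix + F iy + F iz + F iw.
Proof.
rewrite !big_ord_recr big_ord0 /= add0r.
by congr (_ + _ + _ + _); congr F; apply: val_inj.
Qed.

Lemma ord4P (k : 'I_4) : [\/ k = ix, k = iy, k = iz | k = iw].
Proof.
case: k => [[|[|[|[|?]]]] ?] //.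
- by apply: Or41; apply: val_inj.
- by apply: Or42; apply: val_inj.
- by apply: Or43; apply: val_inj.
- by apply: Or44; apply: val_inj.
Qed.

Lemma unit_row_last_row {R : realType} (u : 'rV[R]_4) : u *m u^T = 1%:M ->
  exists theta phi psi : R, row iw (Rxw psi *m Rzw phi *m Rxy theta) = u.
Proof.
move=> uu1.
have u_unit : u 0 ix ^+ 2 + u 0 iy ^+ 2 + u 0 iz ^+ 2 + u 0 iw ^+ 2 = 1.
  by have := congr1 (fun B : 'M_1 => B 0 0) uu1; rewrite !mxE sum_ord4 !mxE !expr2.
have [theta [c_theta s_theta]] := polar_coordinates (u 0 ix) (- u 0 iy).
have [phi [c_phi s_phi]] := polar_coordinates (u 0 iw) (u 0 iz).
set r := Num.sqrt _ in c_theta s_theta; set s := Num.sqrt _ in c_phi s_phi.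
have [psi [c_psi s_psi]] : exists psi : R, cos psi = s /\ sin psi = r.
  apply: cos_sin_of_unit; rewrite !sqr_sqrtr ?addr_ge0 ?sqr_ge0 // sqrrN; lra.
exists theta, phi, psi; apply/rowP => k.
rewrite 2!mxE sum_ord4 !mxE !sum_ord4 !mxE /=.
case: (ord4P k) => -> /=;
  rewrite c_psi s_psi !(mul0r, mulr0, mul1r, mulr1, addr0, add0r); lra.
Qed.

Theorem theorem3 (R : realType) (M : 'M[R]_4) :
  is_rotation M ->
  exists (theta phi psi : R) (R0 : 'M[R]_4),
    trivial_ext_rotation R0 /\
    M = R0 *m Rxw psi *m Rzw phi *m Rxy theta.
Proof.
move=> rotM.
have /unit_row_last_row[theta [phi [psi rowN]]] := rotation_row_unit M iw rotM.
set N := Rxw psi *m Rzw phi *m Rxy theta in rowN.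
have rotN : is_rotation N.
  by do 2?apply: is_rotation_mul; apply: elem_rot_rotation.
exists theta, phi, psi, (M *m N^T); split.
  apply: trivial_ext_rotation_of_row; first exact/is_rotation_mul/is_rotation_tr.
  by rewrite row_mul -rowN -row_mul (mulmx1C rotN.1) row1.
by rewrite -!mulmxA [Rxw psi *m _]mulmxA -/N rotN.1 mulmx1.
Qed.
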